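(* Let $\hat\sigma_x,\hat\sigma_y,\hat\sigma_z$ be the Pauli matrices and, for $m\in\{-\tfrac12,\tfrac12\}$, $\alpha\in[0,2\pi]$, $\beta\in[0,\pi]$, let $$\hat U(m,\alpha,\beta)=\tfrac12\hat I-m\cos\alpha\sin\beta\,\hat\sigma_x-m\sin\alpha\sin\beta\,\hat\sigma_y+m\cos\beta\,\hat\sigma_z .$$ For a qubit state (density matrix) $\hat\rho$ on $\mathbb{C}^2$ define its tomogram $w_{\hat\rho}(m,\alpha,\beta)=\mathrm{Tr}\big(\hat\rho\,\hat U(m,\alpha,\beta)\big)$, and let $\mathfrak T(\mathbb{C}^2)$ be the set of all such tomograms. For $a\in\{x,y,z\}$ let $\breve\Sigma_a$ be the map on $\mathfrak T(\mathbb{C}^2)$ defined by $\breve\Sigma_a(w_{\hat\rho})=w_{\hat\sigma_a\hat\rho\hat\sigma_a}$. Write ${\bf x}=(m,\alpha,\beta)$, ${\bf x}'=(m',\alpha',\beta')$ and $$\int g({\bf x}')\,d{\bf x}':=\sum_{m'=\pm1/2}\frac{1}{2\pi}\int_0^{2\pi}\!\!\int_0^{\pi} g(m',\alpha',\beta')\sin\beta'\,d\beta'\,d\alpha'.$$ Then for each $a\in\{x,y,z\}$ and every $w\in\mathfrak T(\mathbb{C}^2)$, $$\breve\Sigma_a(w)({\bf x})=\int K_a({\bf x};{\bf x}')\,w({\bf x}')\,d{\bf x}',$$ where, with $\delta_{mm'}$ the Kronecker delta, $$K_x({\bf x};{\bf x}')=\tfrac12\delta_{mm'}\big(1+3\cos\alpha\sin\beta\cos\alpha'\sin\beta'-3\sin\alpha\sin\beta\sin\alpha'\sin\beta'-3\cos\beta\cos\beta'\big),$$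 $$K_y({\bf x};{\bf x}')=\tfrac12\delta_{mm'}\big(1-3\cos\alpha\sin\beta\cos\alpha'\sin\beta'+3\sin\alpha\sin\beta\sin\alpha'\sin\beta'-3\cos\beta\cos\beta'\big),$$ $$K_z({\bf x};{\bf x}')=\tfrac12\delta_{mm'}\big(1-3\cos\alpha\sin\beta\cos\alpha'\sin\beta'-3\sin\alpha\sin\beta\sin\alpha'\sin\beta'+3\cos\beta\cos\beta'\big).$$
   Context: A qubit state is a positive semidefinite $2\times2$ complex matrix of trace one. $\hat I$ denotes the $2\times 2$ identity matrix. *)

From Stdlib Require Import Reals.
From Coquelicot Require Export Coquelicot.
Open Scope R_scope.

Record Mat2 := mkMat2 { e11 : C; e12 : C; e21 : C; e22 : C }.

Definition mmul (A B : Mat2) : Mat2 :=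
  mkMat2 (Cplus (Cmult (e11 A) (e11 B)) (Cmult (e12 A) (e21 B)))
         (Cplus (Cmult (e11 A) (e12 B)) (Cmult (e12 A) (e22 B)))
         (Cplus (Cmult (e21 A) (e11 B)) (Cmult (e22 A) (e21 B)))
         (Cplus (Cmult (e21 A) (e12 B)) (Cmult (e22 A) (e22 B))).

Definition madd (A B : Mat2) : Mat2 :=
  mkMat2 (Cplus (e11 A) (e11 B)) (Cplus (e12 A) (e12 B))
         (Cplus (e21 A) (e21 B)) (Cplus (e22 A) (e22 B)).

Definition mscale (c : C) (A : Mat2) : Mat2 :=
  mkMat2 (Cmult c (e11 A)) (Cmult c (e12 A)) (Cmult c (e21 A)) (Cmult c (e22 A)).

Definition mtrace (A : Mat2) : C := Cplus (e11 A) (e22 A).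

Definition Id2 : Mat2 := mkMat2 (RtoC 1) (RtoC 0) (RtoC 0) (RtoC 1).
Definition sigma_x : Mat2 := mkMat2 (RtoC 0) (RtoC 1) (RtoC 1) (RtoC 0).
Definition sigma_y : Mat2 := mkMat2 (RtoC 0) (Copp Ci) Ci (RtoC 0).
Definition sigma_z : Mat2 := mkMat2 (RtoC 1) (RtoC 0) (RtoC 0) (RtoC (-1)).

Definition quadform (A : Mat2) (v1 v2 : C) : C :=
  Cplus (Cmult (Cconj v1) (Cplus (Cmult (e11 A) v1) (Cmult (e12 A) v2)))
        (Cmult (Cconj v2) (Cplus (Cmult (e21 A) v1) (Cmult (e22 A) v2))).

Definition psd (A : Mat2) : Prop :=
  forall v1 v2 : C, Im (quadform A v1 v2) = 0 /\ 0 <= Re (quadform A v1 v2).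

Definition is_qubit_state (rho : Mat2) : Prop := psd rho /\ mtrace rho = RtoC 1.

Definition Uop (m alpha beta : R) : Mat2 :=
  madd (mscale (RtoC (1/2)) Id2)
  (madd (mscale (RtoC (- m * cos alpha * sin beta)) sigma_x)
  (madd (mscale (RtoC (- m * sin alpha * sin beta)) sigma_y)
        (mscale (RtoC (m * cos beta)) sigma_z))).

Definition tomogram (rho : Mat2) (m alpha beta : R) : C :=
  mtrace (mmul rho (Uop m alpha beta)).

Definition is_tomogram (w : R -> R -> R -> C) : Prop :=
  exists rho, is_qubit_state rho /\ w = tomogram rho.

Inductive axis := ax_x | ax_y | ax_z.

Definition pauli (a : axis) : Mat2 :=
  match a with ax_x => sigma_x | ax_y => sigma_y | ax_z => sigma_z end.

Definition Sigma_breve (a : axis) (w w' : R -> R -> R -> C) : Prop :=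
  exists rho, is_qubit_state rho /\ w = tomogram rho /\
              w' = tomogram (mmul (pauli a) (mmul rho (pauli a))).

Definition kron_delta (m m' : R) : R :=
  if Req_EM_T m m' then 1 else 0.

Definition kernel (a : axis) (m alpha beta m' alpha' beta' : R) : R :=
  let cx := cos alpha * sin beta * (cos alpha' * sin beta') in
  let cy := sin alpha * sin beta * (sin alpha' * sin beta') in
  let cz := cos beta * cos beta' in
  match a with
  | ax_x => 1/2 * kron_delta m m' * (1 + 3 * cx - 3 * cy - 3 * cz)
  | ax_y => 1/2 * kron_delta m m' * (1 - 3 * cx + 3 * cy - 3 * cz)
  | ax_z => 1/2 * kron_delta m m' * (1 - 3 * cx - 3 * cy + 3 * cz)
  end.

Definition tomo_integral (g : R -> R -> R -> C) : C :=
  let part (m' : R) : C :=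
    Cmult (RtoC (/ (2 * PI)))
      (RInt (V := C_R_CompleteNormedModule)
        (fun a' => RInt (V := C_R_CompleteNormedModule)
                     (fun b' => Cmult (RtoC (sin b')) (g m' a' b')) 0 PI)
        0 (2 * PI)) in
  Cplus (part (1/2)) (part (-(1/2))).

From Stdlib Require Import Reals Lra Nsatz.
From Coquelicot Require Import Coquelicot.
Open Scope R_scope.

(* The tomogram of any 2x2 matrix rho is an affine function t + c.n of the unit vector
   n = (cos α sin β, sin α sin β, cos β), with complex coefficients c_b = ∓ m Tr(rho σ_b),
   and conjugation by σ_a flips the signs of the c_b with b <> a.  The kernel K_a is
   (δ/2)(1 + 3 Σ_b s_ab n_b n'_b) with s_ab = ±1 according to b = a, so the sphere moments
   ∫ 1 = 4π, ∫ n_b = 0, ∫ n_b n_b' = (4π/3) δ_bb' give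
   (1/2π) ∫ K_a (t + c.n') = δ (t + Σ_b s_ab c_b n_b), the tomogram of σ_a rho σ_a. *)

Lemma is_RInt_sin_trig_affine_mul k0 k1 k2 l0 l1 l2 :
  is_RInt (fun b => sin b * ((k0 + k1 * cos b + k2 * sin b) * (l0 + l1 * cos b + l2 * sin b)))
    0 PI (2 * k0 * l0 + PI / 2 * (k0 * l2 + k2 * l0) + 2 / 3 * k1 * l1 + 4 / 3 * k2 * l2).
Proof.
  set (F b := k0 * l0 * (- cos b) + (k0 * l1 + k1 * l0) * (sin b ^ 2 / 2)
     + (k0 * l2 + k2 * l0) * ((b - sin b * cos b) / 2) + k1 * l1 * (- cos b ^ 3 / 3)
     + (k1 * l2 + k2 * l1) * (sin b ^ 3 / 3) + k2 * l2 * (- cos b + cos b ^ 3 / 3)).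
  replace (2 * k0 * l0 + _ + _ + _) with (minus (F PI) (F 0)).
  2: { unfold F, minus, plus, opp; simpl. rewrite sin_PI, cos_PI, sin_0, cos_0. field. }
  apply (is_RInt_derive (V := R_CompleteNormedModule)).
  - intros b _. unfold F. auto_derive; [exact I |].
    pose proof (sin2_cos2 b) as Hpyth. unfold Rsqr in Hpyth.
    assert (2 * / 2 = 1) by field. assert (3 * / 3 = 1) by field.
    nsatz.
  - intros b _. apply (ex_derive_continuous (V := R_CompleteNormedModule)).
    auto_derive. exact I.
Qed.

Lemma is_RInt_trig_quadratic A B C0 D E F :
  is_RInt (fun a => A + B * cos a + C0 * sin a
                    + D * cos a ^ 2 + E * sin a * cos a + F * sin a ^ 2) 0 (2 * PI)
    (2 * PI * A + PI * D + PI * F).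
Proof.
  set (G a := A * a + B * sin a - C0 * cos a + D * ((a + sin a * cos a) / 2)
     + E * (sin a ^ 2 / 2) + F * ((a - sin a * cos a) / 2)).
  replace (2 * PI * A + _ + _) with (minus (G (2 * PI)) (G 0)).
  2: { unfold G, minus, plus, opp; simpl. rewrite sin_2PI, cos_2PI, sin_0, cos_0. field. }
  apply (is_RInt_derive (V := R_CompleteNormedModule)).
  - intros a _. unfold G. auto_derive; [exact I |].
    pose proof (sin2_cos2 a) as Hpyth. unfold Rsqr in Hpyth.
    assert (2 * / 2 = 1) by field. cbn [pow]. nsatz.
  - intros a _. apply (ex_derive_continuous (V := R_CompleteNormedModule)).
    auto_derive. exact I.
Qed.

Lemma is_RInt_ext_R (f g : R -> R) a b l :
  (forall x, f x = g x) -> is_RInt f a b l -> is_RInt g a b l.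
Proof. intros Hfg. apply is_RInt_ext. intros x _. apply Hfg. Qed.

Definition dir (b : axis) (alpha beta : R) : R :=
  match b with
  | ax_x => cos alpha * sin beta
  | ax_y => sin alpha * sin beta
  | ax_z => cos beta
  end.

Definition affine_dir (k0 : R) (k : axis -> R) (alpha beta : R) : R :=
  k0 + k ax_x * dir ax_x alpha beta + k ax_y * dir ax_y alpha beta
     + k ax_z * dir ax_z alpha beta.

Definition affine_dirC (c0 : C) (c : axis -> C) (alpha beta : R) : C :=
  (c0 + dir ax_x alpha beta * c ax_x + dir ax_y alpha beta * c ax_y
      + dir ax_z alpha beta * c ax_z)%C.

(* Iterated integral against dα sin β dβ on [0, 2π] × [0, π], the area measure of the sphere. *)
Definition is_sphere_integral (f : R -> R -> R) (I : R) : Prop :=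
  exists F : R -> R,
    (forall alpha, is_RInt (fun beta => sin beta * f alpha beta) 0 PI (F alpha)) /\
    is_RInt F 0 (2 * PI) I.

Lemma is_sphere_integral_ext f g I :
  (forall alpha beta, f alpha beta = g alpha beta) ->
  is_sphere_integral f I -> is_sphere_integral g I.
Proof.
  intros Hfg [F [Hin Hout]]. exists F. split; [| exact Hout].
  intros alpha. eapply is_RInt_ext_R; [| exact (Hin alpha)].
  intros beta. cbv beta. now rewrite Hfg.
Qed.

Lemma is_sphere_integral_affine_mul k0 k l0 l :
  is_sphere_integral (fun alpha beta => affine_dir k0 k alpha beta * affine_dir l0 l alpha beta)
    (4 * PI * (k0 * l0 + (k ax_x * l ax_x + k ax_y * l ax_y + k ax_z * l ax_z) / 3)).
Proof.
  set (p a := k ax_x * cos a + k ax_y * sin a).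
  set (q a := l ax_x * cos a + l ax_y * sin a).
  exists (fun a => 2 * k0 * l0 + PI / 2 * (k0 * q a + p a * l0)
                   + 2 / 3 * k ax_z * l ax_z + 4 / 3 * p a * q a).
  split.
  - intros a.
    eapply is_RInt_ext_R;
      [| exact (is_RInt_sin_trig_affine_mul k0 (k ax_z) (p a) l0 (l ax_z) (q a))].
    intros b. unfold affine_dir, dir, p, q. ring.
  - replace (4 * PI * _) with
      (2 * PI * (2 * k0 * l0 + 2 / 3 * k ax_z * l ax_z) + PI * (4 / 3 * k ax_x * l ax_x)
       + PI * (4 / 3 * k ax_y * l ax_y)) by field.
    eapply is_RInt_ext_R; [| apply (is_RInt_trig_quadratic
      (2 * k0 * l0 + 2 / 3 * k ax_z * l ax_z) (PI / 2 * (k0 * l ax_x + k ax_x * l0))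
      (PI / 2 * (k0 * l ax_y + k ax_y * l0)) (4 / 3 * k ax_x * l ax_x)
      (4 / 3 * (k ax_x * l ax_y + k ax_y * l ax_x)) (4 / 3 * k ax_y * l ax_y))].
    intros a. unfold p, q. ring.
Qed.

Lemma is_RInt_pair (g : R -> C) a b v1 v2 :
  is_RInt (fun x => Re (g x)) a b v1 -> is_RInt (fun x => Im (g x)) a b v2 ->
  is_RInt (V := C_R_CompleteNormedModule) g a b ((v1, v2) : C).
Proof.
  exact (@is_RInt_fct_extend_pair R_NormedModule R_NormedModule g a b v1 v2).
Qed.

Lemma RInt_sphere_C (g : R -> R -> C) Ir Ii :
  is_sphere_integral (fun alpha beta => Re (g alpha beta)) Ir ->
  is_sphere_integral (fun alpha beta => Im (g alpha beta)) Ii ->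
  RInt (V := C_R_CompleteNormedModule)
    (fun alpha => RInt (V := C_R_CompleteNormedModule)
                    (fun beta => Cmult (RtoC (sin beta)) (g alpha beta)) 0 PI) 0 (2 * PI)
  = (Ir, Ii).
Proof.
  intros [Fr [Hr Hr']] [Fi [Hi Hi']].
  apply is_RInt_unique.
  apply (is_RInt_ext (V := C_R_CompleteNormedModule) (fun alpha => (Fr alpha, Fi alpha))).
  - intros alpha _. symmetry. apply is_RInt_unique. apply is_RInt_pair.
    + eapply is_RInt_ext_R; [| exact (Hr alpha)]. intros beta. unfold Re. simpl. ring.
    + eapply is_RInt_ext_R; [| exact (Hi alpha)]. intros beta. unfold Im. simpl. ring.
  - now apply is_RInt_pair.
Qed.

Definition axis_sign (a b : axis) : R :=
  match a, b with
  | ax_x, ax_x | ax_y, ax_y | ax_z, ax_z => 1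
  | _, _ => -1
  end.

Lemma kernel_affine_dir a m alpha beta m' alpha' beta' :
  kernel a m alpha beta m' alpha' beta'
  = affine_dir (kron_delta m m' / 2)
      (fun b => 3 / 2 * kron_delta m m' * axis_sign a b * dir b alpha beta) alpha' beta'.
Proof.
  unfold kernel, affine_dir, dir. destruct a; simpl; field.
Qed.

Lemma kernel_integral_affine_dirC a m alpha beta m' (w : R -> R -> C) c0 c :
  (forall alpha' beta', w alpha' beta' = affine_dirC c0 c alpha' beta') ->
  Cmult (RtoC (/ (2 * PI)))
    (RInt (V := C_R_CompleteNormedModule)
      (fun alpha' => RInt (V := C_R_CompleteNormedModule)
         (fun beta' => Cmult (RtoC (sin beta'))
            (Cmult (RtoC (kernel a m alpha beta m' alpha' beta')) (w alpha' beta'))) 0 PI)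
      0 (2 * PI))
  = Cmult (RtoC (kron_delta m m'))
      (affine_dirC c0 (fun b => Cmult (RtoC (axis_sign a b)) (c b)) alpha beta).
Proof.
  intros Hw.
  set (k b := 3 / 2 * kron_delta m m' * axis_sign a b * dir b alpha beta).
  assert (Hcomponent : forall part : C -> R, part = Re \/ part = Im ->
    is_sphere_integral
      (fun alpha' beta' =>
         part (Cmult (RtoC (kernel a m alpha beta m' alpha' beta')) (w alpha' beta')))
      (4 * PI * (kron_delta m m' / 2 * part c0
                 + (k ax_x * part (c ax_x) + k ax_y * part (c ax_y)
                    + k ax_z * part (c ax_z)) / 3))).
  { intros part Hpart.
    eapply is_sphere_integral_ext;
      [| exact (is_sphere_integral_affine_mul _ k (part c0) (fun b => part (c b)))].
    intros alpha' beta'. rewrite Hw, kernel_affine_dir.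
    unfold affine_dirC, affine_dir, k.
    destruct Hpart as [-> | ->]; unfold Re, Im; simpl; ring. }
  rewrite (RInt_sphere_C _ _ _ (Hcomponent Re (or_introl eq_refl))
                                (Hcomponent Im (or_intror eq_refl))).
  pose proof PI_neq0.
  unfold affine_dirC, k, Re, Im, Cmult, Cplus, RtoC.
  destruct c0, (c ax_x), (c ax_y), (c ax_z); simpl; f_equal; field; auto.
Qed.

(* Signs of the Pauli components of [Uop]: [-σx], [-σy], [+σz]. *)
Definition uop_sign (b : axis) : R := match b with ax_z => 1 | _ => -1 end.

Definition tomo_coeff (rho : Mat2) (m : R) (b : axis) : C :=
  Cmult (RtoC (m * uop_sign b)) (mtrace (mmul rho (pauli b))).

Lemma tomogram_affine_dirC rho m alpha beta :
  tomogram rho m alpha beta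
  = affine_dirC (Cmult (RtoC (/ 2)) (mtrace rho)) (tomo_coeff rho m) alpha beta.
Proof.
  destruct rho as [[r11 i11] [r12 i12] [r21 i21] [r22 i22]].
  unfold tomogram, tomo_coeff, affine_dirC, Uop, mtrace, mmul, madd, mscale, Id2.
  cbn [dir uop_sign pauli sigma_x sigma_y sigma_z e11 e12 e21 e22].
  unfold Cmult, Cplus, RtoC, Ci, Copp. cbn [fst snd].
  f_equal; field.
Qed.

Lemma mtrace_pauli_conj a rho :
  mtrace (mmul (pauli a) (mmul rho (pauli a))) = mtrace rho.
Proof.
  destruct rho as [[r11 i11] [r12 i12] [r21 i21] [r22 i22]].
  destruct a; unfold mtrace, mmul; cbn [pauli sigma_x sigma_y sigma_z e11 e12 e21 e22];
    unfold Cmult, Cplus, RtoC, Ci, Copp; cbn [fst snd]; f_equal; ring.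
Qed.

Lemma tomo_coeff_pauli_conj a rho m b :
  tomo_coeff (mmul (pauli a) (mmul rho (pauli a))) m b
  = Cmult (RtoC (axis_sign a b)) (tomo_coeff rho m b).
Proof.
  destruct rho as [[r11 i11] [r12 i12] [r21 i21] [r22 i22]].
  destruct a, b; unfold tomo_coeff, mtrace, mmul;
    cbn [axis_sign uop_sign pauli sigma_x sigma_y sigma_z e11 e12 e21 e22];
    unfold Cmult, Cplus, RtoC, Ci, Copp; cbn [fst snd]; f_equal; ring.
Qed.

Lemma tomogram_pauli_conj a rho m alpha beta :
  tomogram (mmul (pauli a) (mmul rho (pauli a))) m alpha beta
  = affine_dirC (Cmult (RtoC (/ 2)) (mtrace rho))
      (fun b => Cmult (RtoC (axis_sign a b)) (tomo_coeff rho m b)) alpha beta.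
Proof.
  rewrite tomogram_affine_dirC, mtrace_pauli_conj.
  unfold affine_dirC. now rewrite !tomo_coeff_pauli_conj.
Qed.

Lemma kernel_integral_tomogram a rho m alpha beta m' :
  Cmult (RtoC (/ (2 * PI)))
    (RInt (V := C_R_CompleteNormedModule)
      (fun alpha' => RInt (V := C_R_CompleteNormedModule)
         (fun beta' => Cmult (RtoC (sin beta'))
            (Cmult (RtoC (kernel a m alpha beta m' alpha' beta'))
                   (tomogram rho m' alpha' beta'))) 0 PI)
      0 (2 * PI))
  = Cmult (RtoC (kron_delta m m'))
      (tomogram (mmul (pauli a) (mmul rho (pauli a))) m' alpha beta).
Proof.
  rewrite (kernel_integral_affine_dirC a m alpha beta m' (tomogram rho m') _ _
             (tomogram_affine_dirC rho m')).
  now rewrite tomogram_pauli_conj.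
Qed.

Lemma kron_delta_spin_sum (f : R -> C) m :
  m = 1 / 2 \/ m = - (1 / 2) ->
  Cplus (Cmult (RtoC (kron_delta m (1 / 2))) (f (1 / 2)))
        (Cmult (RtoC (kron_delta m (- (1 / 2)))) (f (- (1 / 2))))
  = f m.
Proof.
  unfold kron_delta.
  intros [-> | ->];
    destruct (Req_EM_T _ (1 / 2)), (Req_EM_T _ (- (1 / 2))); try lra;
    rewrite Cmult_1_l, Cmult_0_l; [apply Cplus_0_r | apply Cplus_0_l].
Qed.

Theorem proposition3 :
  forall (a : axis) (w w' : R -> R -> R -> C),
    is_tomogram w ->
    Sigma_breve a w w' ->
    forall m alpha beta : R,
      (m = 1/2 \/ m = -(1/2)) ->
      0 <= alpha <= 2 * PI ->
      0 <= beta <= PI ->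
      w' m alpha beta =
      tomo_integral (fun m' alpha' beta' =>
        Cmult (RtoC (kernel a m alpha beta m' alpha' beta')) (w m' alpha' beta')).
Proof.
  intros a w w' _ [rho [_ [-> ->]]] m alpha beta Hm _ _.
  unfold tomo_integral. cbv zeta.
  rewrite !kernel_integral_tomogram.
  symmetry.
  exact (kron_delta_spin_sum
           (fun m' => tomogram (mmul (pauli a) (mmul rho (pauli a))) m' alpha beta) m Hm).
Qed.
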